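(* Let $q$ be a prime power and $n,d$ integers with $n\ge 2d\ge 2$, and assume $(n,q)\neq(2d,2)$. Then for all $0\le i\le d$ and $0\le j\le d$, $$|T_{h_{\max}}(i,j)|-|T_{h_{\max}-1}(i,j)|\le |G_j(i)|\le |T_{h_{\max}}(i,j)|,$$ where $h_{\max}=h_{\max}(i,j)=\min\{i,d-j\}$.
   Context: For integers $m\ge 0$ and $l$, the Gaussian coefficient is ${m\brack l}=\prod_{t=1}^{l}\frac{q^{m-t+1}-1}{q^t-1}$ for $l\ge 0$ (this is $0$ if $l>m$) and ${m\brack l}=0$ for $l<0$. For $0\le i,j\le d$ define $$G_j(i)=\sum_{h=\max\{0,i-j\}}^{\min\{i,d-j\}}(-1)^{i-h}q^{j(j-i+h)+\binom{i-h}{2}}{i\brack h}{d-h\brack j}{n-d-i+h\brack n-d-j};$$ these are the eigenvalues of the Grassmann graph $G_q(n,d,j)$ (vertices: $d$-dimensional subspaces of $\mathbb F_q^n$, two adjacent iff their intersection has dimension $d-j$). For $\max\{0,i-j\}\le h\le \min\{i,d-j\}$, $T_h(i,j)$ denotes the $h$-th summand above; for all other integers $h$ (in particular $h=-1$) set $T_h(i,j)=0$. *)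

From mathcomp Require Import all_boot all_order all_algebra.
Set Implicit Arguments. Unset Strict Implicit. Unset Printing Implicit Defensive.
Import Order.TTheory GRing.Theory Num.Theory.
Local Open Scope ring_scope.

Definition prime_power (q : nat) : Prop :=
  exists p k : nat, prime p /\ (0 < k)%N /\ q = (p ^ k)%N.

(* Gaussian coefficient [m brack l]_q, valued in rat; l : int.
   For l >= 0 it is prod_{t=1}^{l} (q^(m-t+1) - 1)/(q^t - 1); 0 for l < 0.
   (For l > m the factor t = m+1 is q^0 - 1 = 0.) *)
Definition gauss (q m : nat) (l : int) : rat :=
  if (l < 0)%R then 0
  else \prod_(1 <= t < `|l|%N.+1)
         (((q%:R : rat) ^+ (m.+1 - t) - 1) / ((q%:R : rat) ^+ t - 1)).

Definition Tterm (q n d i j h : nat) : rat :=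
  (-1) ^+ (i - h) * (q%:R : rat) ^+ (j * (j + h - i) + 'C(i - h, 2))
  * gauss q i h%:Z * gauss q (d - h) j%:Z
  * gauss q (n - d - i + h) (n - d - j)%:Z.

(* lower and upper summation bounds max{0,i-j}, min{i,d-j} *)
Definition hlo (i j : nat) : nat := (i - j)%N.
Definition hmax (d i j : nat) : nat := minn i (d - j).

Definition T (q n d i j : nat) (h : int) : rat :=
  if ((hlo i j)%:Z <= h) && (h <= (hmax d i j)%:Z)
  then Tterm q n d i j `|h|%N else 0.

Definition G (q n d j i : nat) : rat :=
  \sum_(hlo i j <= h < (hmax d i j).+1) Tterm q n d i j h.

From mathcomp Require Import all_boot all_order all_algebra.
From mathcomp Require Import zify ring lra.
Import Order.TTheory GRing.Theory Num.Theory.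
Local Open Scope ring_scope.

(* Write each summand as T_h = (-1)^(i-h) Q_h with Q_h >= 0.  For q >= 2 the
   sequence Q_h is nondecreasing on the range h_lo <= h <= h_max, unless
   (n, q) = (2d, 2): the ratio Q_{h+1} / Q_h is an explicit quotient of
   factors q^t - 1 (Gaussian coefficient recurrences), and it is >= 1 by an
   elementary inequality between such factors.  Since G_j(i) is, up to sign,
   the alternating sum a_m - a_{m-1} + a_{m-2} - ... of the nondecreasing
   nonnegative sequence a_k = Q_{h_lo + k}, it lies between a_m - a_{m-1} and
   a_m, which is the claim. *)

Section PowerInequalities.
Variable R : realFieldType.
Implicit Types x P W S H K : R.

Lemma cross_bound x P W K : 2 <= x -> 1 <= P -> 1 <= W -> 1 <= K ->
  3 <= x \/ x <= K -> x * P * W <= K * ((P * x - 1) * (W * x - 1)).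
Proof.
move=> x2 P1 W1 K1 [x3 | xK].
- have PW1 : 1 <= P * W by rewrite -[1]mulr1; apply: ler_pM; lra.
  have : 0 <= (P - 1) * (W - 1) by apply: mulr_ge0; lra.
  have : 0 <= P * W * (x - 3) by apply: mulr_ge0; [apply: mulr_ge0 |]; lra.
  have : 0 <= (P * x - 1) * (W * x - 1) by apply: mulr_ge0; nra.
  nra.
- have PW : P * W <= (P * x - 1) * (W * x - 1) by apply: ler_pM; nra.
  have : 0 <= P * W by apply: mulr_ge0; lra.
  nra.
Qed.

(* The ratio inequality behind the monotonicity of Q, with the powers of x
   abstracted as numbers >= 1 and the crucial input [cross_bound]. *)
Lemma ratio_ineq x P W S H K : 2 <= x ->
  1 <= P -> 1 <= W -> 1 <= S -> 1 <= H -> 1 <= K ->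
  x * P * W <= K * ((P * x - 1) * (W * x - 1)) ->
  (H - 1) * (W * S * P * x - 1) * (S - 1)
  <= S * ((P * x - 1) * (W * x - 1) * (W * H * S * K - 1)).
Proof.
move=> x2 P1 W1 S1 H1 K1 cross.
set D := (P * x - 1) * (W * x - 1).
have D0 : 0 <= D by rewrite /D; apply: mulr_ge0; nra.
have WS1 : 1 <= W * S by rewrite -[1]mulr1; apply: ler_pM; lra.
have WSK1 : 1 <= W * S * K by rewrite -[1]mulr1; apply: ler_pM; lra.
have last_factor : W * S * K * (H - 1) <= W * H * S * K - 1 by nra.
have step1 : S * D * (W * S * K * (H - 1)) <= S * (D * (W * H * S * K - 1)).
  by rewrite -mulrA; apply: ler_wpM2l; [lra | exact: ler_wpM2l].
set Y := W * S * P * x.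
have Y0 : 0 <= Y by rewrite /Y !mulr_ge0 //; lra.
have step2 : (H - 1) * (S * W * Y) <= S * D * (W * S * K * (H - 1)).
  have -> : S * D * (W * S * K * (H - 1)) = (H - 1) * (S * S * W) * (K * D) by ring.
  have -> : (H - 1) * (S * W * Y) = (H - 1) * (S * S * W) * (x * P * W)
    by rewrite /Y; ring.
  by apply: ler_wpM2l => //; rewrite !mulr_ge0 //; lra.
have step3 : (H - 1) * (Y - 1) * (S - 1) <= (H - 1) * (S * W * Y).
  rewrite -mulrA; apply: ler_wpM2l; first lra.
  have : S * Y <= S * Y * W by rewrite -{1}[S * Y]mulr1 ler_wpM2l ?mulr_ge0 //; lra.
  nra.
lra.
Qed.

(* [ratio_ineq] for actual powers of x; the case split x >= 3 or k >= 1
   reflects the excluded case (n, q) = (2d, 2). *)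
Lemma key_ineq x (u w k s h : nat) : 2 <= x -> 3 <= x \/ (1 <= k)%N ->
  (x ^+ h - 1) * (x ^+ (w + s + u + 1) - 1) * (x ^+ s - 1)
  <= x ^+ s * ((x ^+ (u + 1) - 1) * (x ^+ (w + 1) - 1) * (x ^+ (w + h + s + k) - 1)).
Proof.
move=> x2 hk; have ge1 t : 1 <= x ^+ t by apply: exprn_ege1; lra.
rewrite !exprD !expr1.
apply: ratio_ineq => //; apply: cross_bound => //.
case: hk => [x3 | k1]; [by left | right].
by rewrite -(prednK k1) exprS; have := ge1 k.-1; nra.
Qed.

End PowerInequalities.

Section AlternatingSums.
Context {R : realDomainType}.
Implicit Type a : nat -> R.

Definition altsum a m : R := \sum_(0 <= k < m.+1) (-1) ^+ (m - k) * a k.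

Definition prev_term a m : R := if m is m'.+1 then a m' else 0.

Lemma altsumS a m : altsum a m.+1 = a m.+1 - altsum a m.
Proof.
rewrite /altsum big_nat_recr //= subnn expr0 mul1r addrC; congr (_ + _).
rewrite -sumrN; apply: eq_big_nat => k /andP [_ km].
by rewrite subSn // exprS mulN1r mulNr.
Qed.

Lemma altsum_bounds {a m} : 0 <= a 0%N -> (forall k, (k < m)%N -> a k <= a k.+1) ->
  [/\ 0 <= altsum a m, altsum a m <= a m & a m - prev_term a m <= altsum a m].
Proof.
move=> a0; elim: m => [|m IH] mono.
  by rewrite /altsum big_nat1 subnn expr0 mul1r subr0.
have [lb ub step] := IH (fun k km => mono k (ltnW km)).
have := mono m (ltnSn m); rewrite altsumS /=; split; lra.
Qed.

End AlternatingSums.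

Section GaussianCoefficients.
Variable q : nat.
Local Notation x := (q%:R : rat).

Lemma gauss_nat m l : gauss q m l%:Z =
  \prod_(1 <= t < l.+1) ((x ^+ (m.+1 - t) - 1) / (x ^+ t - 1)).
Proof. by rewrite /gauss ltNge lez_nat. Qed.

Lemma gaussS m l :
  gauss q m (l.+1)%:Z = gauss q m l%:Z * ((x ^+ (m - l) - 1) / (x ^+ l.+1 - 1)).
Proof. by rewrite !gauss_nat big_nat_recr. Qed.

Lemma gauss_ge0 m l : (0 < q)%N -> 0 <= gauss q m l.
Proof.
move=> q0; rewrite /gauss; case: ifP => // _.
by apply: prodr_ge0 => t _; rewrite divr_ge0 // subr_ge0 exprn_ege1 // ler1n.
Qed.

Lemma gauss_top_mul m l : (l <= m)%N ->
  gauss q m.+1 l%:Z * (x ^+ (m.+1 - l) - 1) = gauss q m l%:Z * (x ^+ m.+1 - 1).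
Proof.
elim: l => [|l IH] lm; first by rewrite !gauss_nat !big_geq // subn0.
rewrite !gaussS subSS.
have e : (m.+1 - l = (m - l).+1)%N by lia.
have := IH (ltnW lm); rewrite e => IH'.
transitivity (gauss q m.+1 l * (x ^+ (m - l).+1 - 1) * ((x ^+ (m - l) - 1) / (x ^+ l.+1 - 1)));
  first by ring.
by rewrite IH'; ring.
Qed.

Lemma pow_sub1_gt0 (t : nat) : (2 <= q)%N -> (0 < t)%N -> 0 < x ^+ t - 1.
Proof.
move=> q2 t0; rewrite subr_gt0 exprn_egt1 -?lt0n //.
by rewrite (ltr_nat _ 1).
Qed.

Lemma gauss_top m l : (2 <= q)%N -> (l <= m)%N ->
  gauss q m.+1 l%:Z = gauss q m l%:Z * ((x ^+ m.+1 - 1) / (x ^+ (m.+1 - l) - 1)).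
Proof.
move=> q2 lm; have pos := @pow_sub1_gt0 (m.+1 - l) q2 (ltac:(lia)).
by rewrite mulrA -gauss_top_mul // mulfK // lt0r_neq0.
Qed.

End GaussianCoefficients.

Section Summands.
Variables q n d i j : nat.
Local Notation x := (q%:R : rat).

Definition Q (h : nat) : rat :=
  x ^+ (j * (j + h - i) + 'C(i - h, 2)) * gauss q i h%:Z
  * gauss q (d - h) j%:Z * gauss q (n - d - i + h) (n - d - j)%:Z.

Lemma Tterm_Q h : Tterm q n d i j h = (-1) ^+ (i - h) * Q h.
Proof. by rewrite /Tterm /Q !mulrA. Qed.

Lemma Q_ge0 h : (0 < q)%N -> 0 <= Q h.
Proof. by move=> q0; rewrite /Q !mulr_ge0 ?gauss_ge0 ?exprn_ge0 ?ler0n. Qed.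

Lemma Q_exponentS h : (i - j <= h)%N -> (h < i)%N ->
  (j * (j + h.+1 - i) + 'C(i - h.+1, 2)
   = j * (j + h - i) + 'C(i - h, 2) + (j + h.+1 - i))%N.
Proof.
move=> lo_h h_i.
have -> : (i - h = (i - h.+1).+1)%N by lia.
have -> : (j + h.+1 - i = (j + h - i).+1)%N by lia.
rewrite binS bin1 mulnS; lia.
Qed.

Definition Qratio (h : nat) : rat :=
  let s := (j + h.+1 - i)%N in
  x ^+ s * ((x ^+ (i - h) - 1) * (x ^+ (d - h - j) - 1) * (x ^+ (n - d - i + h).+1 - 1))
  / ((x ^+ h.+1 - 1) * (x ^+ s - 1) * (x ^+ (d - h) - 1)).

Hypotheses (q2 : (2 <= q)%N) (i_d : (i <= d)%N) (dn : (2 * d <= n)%N).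

Lemma Q_succ h : (hlo i j <= h)%N -> (h < hmax d i j)%N -> Q h.+1 = Q h * Qratio h.
Proof.
rewrite /hlo /hmax leq_min => lo_h /andP [h_i h_dj].
rewrite /Q /Qratio Q_exponentS // exprD gaussS.
have -> : (d - h = (d - h.+1).+1)%N by lia.
rewrite (@gauss_top q (d - h.+1) j q2); last by lia.
rewrite [(n - d - i + h.+1)%N]addnS (@gauss_top q (n - d - i + h) (n - d - j) q2);
  last by lia.
have -> : ((n - d - i + h).+1 - (n - d - j) = j + h.+1 - i)%N by lia.
have -> : ((d - h.+1).+1 - j = d - h - j)%N by lia.
have pos t : (0 < t)%N -> x ^+ t - 1 != 0 by move=> t0; rewrite lt0r_neq0 ?pow_sub1_gt0.
by field; rewrite !pos //; lia.
Qed.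

Lemma Qratio_ge1 h : (3 <= q \/ 2 * d < n)%N ->
  (hlo i j <= h)%N -> (h < hmax d i j)%N -> 1 <= Qratio h.
Proof.
rewrite /hlo /hmax leq_min => q3_or_n lo_h /andP [h_i h_dj].
have x2 : 2 <= x by rewrite (ler_nat _ 2).
have pos t : (0 < t)%N -> 0 < x ^+ t - 1 by move=> t0; rewrite pow_sub1_gt0.
rewrite /Qratio ler_pdivlMr ?mul1r ?mulr_gt0 ?pos //; try lia.
set u := (i - h.+1)%N; set w := (d - h.+1 - j)%N; set k := (n - 2 * d)%N.
set s := (j + h.+1 - i)%N.
have -> : (i - h = u + 1)%N by lia.
have -> : (d - h - j = w + 1)%N by lia.
have -> : (d - h = w + s + u + 1)%N by lia.
have -> : ((n - d - i + h).+1 = w + h.+1 + s + k)%N by lia.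
rewrite mulrAC; apply: key_ineq => //.
by case: q3_or_n => [q3 | nd]; [left; rewrite (ler_nat _ 3) | right; lia].
Qed.

Lemma Q_mono h : (3 <= q \/ 2 * d < n)%N ->
  (hlo i j <= h)%N -> (h < hmax d i j)%N -> Q h <= Q h.+1.
Proof.
move=> q3_or_n lo_h h_hi; rewrite Q_succ // -{1}[Q h]mulr1.
by apply: ler_wpM2l; [apply: Q_ge0; lia | exact: Qratio_ge1].
Qed.

End Summands.

Lemma prime_power_ge2 {q} : prime_power q -> (2 <= q)%N.
Proof.
move=> [p [e [p_prime [e_gt0 ->]]]].
apply: leq_trans (prime_gt1 p_prime) _.
by rewrite -{1}(expn1 p) leq_pexp2l // prime_gt0.
Qed.

Lemma hlo_le_hmax {d i} j : (i <= d)%N -> (hlo i j <= hmax d i j)%N.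
Proof. by move=> i_d; rewrite /hlo /hmax leq_min; apply/andP; split; lia. Qed.

Lemma normT q n d i j h : (0 < q)%N -> (hlo i j <= h <= hmax d i j)%N ->
  `|T q n d i j h%:Z| = Q q n d i j h.
Proof.
move=> q0 h_range; rewrite /T !lez_nat h_range /= Tterm_Q.
by rewrite normrM normrX normrN1 expr1n mul1r ger0_norm // Q_ge0.
Qed.

Lemma normT_pred q n d i j : (0 < q)%N -> (i <= d)%N ->
  `|T q n d i j ((hmax d i j)%:Z - 1)|
  = prev_term (fun k => Q q n d i j (k + hlo i j)) (hmax d i j - hlo i j).
Proof.
move=> q0 i_d; have := hlo_le_hmax j i_d.
case E : (hmax d i j - hlo i j)%N => [|m] /= lo_hi.
  rewrite /T ifF ?normr0 //; apply/negbTE/nandP; left; lia.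
have -> : (hmax d i j)%:Z - 1 = (m + hlo i j)%N%:Z by lia.
by rewrite normT //; apply/andP; split; lia.
Qed.

Lemma G_altsum q n d i j : (i <= d)%N ->
  G q n d j i = (-1) ^+ (i - hmax d i j)
    * altsum (fun k => Q q n d i j (k + hlo i j)) (hmax d i j - hlo i j).
Proof.
move=> i_d; have lo_hi := hlo_le_hmax j i_d.
have hi_i : (hmax d i j <= i)%N by rewrite geq_minl.
rewrite /G -{1}(add0n (hlo i j)) big_addn subSn // /altsum big_distrr /=.
apply: eq_big_nat => k /andP [_ k_m]; rewrite Tterm_Q mulrA -exprD.
by congr (_ ^+ _ * _); lia.
Qed.

Theorem lemma3p1 (q n d : nat) :
  prime_power q -> (1 <= d)%N -> (2 * d <= n)%N -> ~ (n = (2 * d)%N /\ q = 2%N) ->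
  forall i j : nat, (i <= d)%N -> (j <= d)%N ->
    `|T q n d i j (hmax d i j)%:Z| - `|T q n d i j ((hmax d i j)%:Z - 1)|
      <= `|G q n d j i| /\
    `|G q n d j i| <= `|T q n d i j (hmax d i j)%:Z|.
Proof.
move=> q_pp _ dn not_2d2 i j i_d _.
have q2 := prime_power_ge2 q_pp.
have q3_or_n : (3 <= q \/ 2 * d < n)%N by lia.
have lo_hi := hlo_le_hmax j i_d.
pose a k := Q q n d i j (k + hlo i j).
have a_mono k : (k < hmax d i j - hlo i j)%N -> a k <= a k.+1.
  by move=> k_m; rewrite /a addSn; apply: Q_mono => //; lia.
have [nonneg upper lower] := altsum_bounds (a := a) (Q_ge0 q n d i j _ (ltnW q2)) a_mono.
have top : `|T q n d i j (hmax d i j)%:Z| = a (hmax d i j - hlo i j)%N.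
  by rewrite normT ?(ltnW q2) ?lo_hi ?leqnn // /a subnK.
rewrite G_altsum // normrM normrX normrN1 expr1n mul1r ger0_norm //.
by rewrite top normT_pred ?(ltnW q2).
Qed.
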